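(* Let $(X,\kappa)$ be a finite digital image and $f:X\to X$ a continuous self-map with $L(f)\neq 0$. Then either $f$ has a fixed point, or $f$ has at least two approximate fixed points.
   Context: A digital image is a pair $(X,\kappa)$ where $X$ is a set and $\kappa$ is a symmetric irreflexive relation on $X$ (the adjacency). Write $x\leftrightarrow y$ if adjacent, $x\Leftrightarrow y$ if adjacent or equal. A map $f$ is continuous if $x\leftrightarrow y$ implies $f(x)\Leftrightarrow f(y)$. A point $x$ is an approximate fixed point of $f:X\to X$ if $f(x)\Leftrightarrow x$. Simplicial homology: a $q$-simplex of $X$ is a set of $q+1$ pairwise adjacent points. $C_q(X)$ is the free abelian group generated by ordered $q$-simplices $\langle x_0,\dots,x_q\rangle$ modulo $\langle x_{\rho(0)},\dots,x_{\rho(q)}\rangle=\operatorname{sgn}(\rho)\langle x_0,\dots,x_q\rangle$, with boundary $\partial\langle x_0,\dots,x_q\rangle=\sum_{i=0}^q(-1)^i\langle x_0,\dots,\widehat{x_i},\dots,x_q\rangle$; $H_q(X)$ is its homology. For continuous $f$, $f_q\langle p_0,\dots,p_q\rangle=\langle f(p_0),\dots,f(p_q)\rangle$ (interpreted as $0$ if the image has fewer than $q+1$ points); this is a chain map inducing $f_{*,q}$ on $H_q$. The simplicial Lefschetz number of a self-map $f$ of a finite image is $L(f)=\sum_{q\ge0}(-1)^q\operatorname{tr}(f_{*,q})$, traces taken on $H_q(X)\otimes\mathbb Q$. *)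

From HB Require Import structures.
From mathcomp Require Import all_boot all_order all_algebra.
Set Implicit Arguments. Unset Strict Implicit. Unset Printing Implicit Defensive.
Import Order.TTheory GRing.Theory Num.Theory.
Local Open Scope ring_scope.

Section DigitalImage.
Variables (X : finType) (e : rel X).

Definition adj_eq (x y : X) : bool := (x == y) || e x y.

Definition dcontinuous (f : X -> X) : Prop :=
  forall x y, e x y -> adj_eq (f x) (f y).

Definition approx_fixed (f : X -> X) (x : X) : Prop := adj_eq (f x) x.

Definition simplex (s : {set X}) : bool :=
  (0 < #|s|)%N && [forall x in s, forall y in s, (x != y) ==> e x y].

Definition qsimplex (q : nat) (s : {set X}) : bool := simplex s && (#|s| == q.+1)%N.

(* Chains are row vectors indexed by {set X}; the basis vector at a simplex s
   is the oriented simplex <x_0,...,x_q> with x_0 < ... < x_q listed in the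
   order of [enum s] (i.e. increasing enum_rank). *)
Definition N := #|{set X}|.
Definition idx (s : {set X}) : 'I_N := enum_rank s.

(* boundary matrix: row s, column t = coefficient of <t> in boundary <s> *)
Definition bnd : 'M[rat]_N :=
  \matrix_(i < N, j < N)
    let s := enum_val i in let t := enum_val j in
    if [&& simplex s, simplex t, t \subset s & (#|t|.+1 == #|s|)%N]
    then \sum_(x in s :\: t) (-1) ^+ (index x (enum s))
    else 0.

Definition inversions (f : X -> X) (s : {set X}) : nat :=
  #|[set p : X * X | [&& p.1 \in s, p.2 \in s,
        (enum_rank p.1 < enum_rank p.2)%N & (enum_rank (f p.2) < enum_rank (f p.1))%N]]|.

(* chain map f_# : row s, column t = coefficient of <t> in f_#<s>
   (0 if f(s) has fewer points than s; otherwise sign of the sorting permutation) *)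
Definition chainmap (f : X -> X) : 'M[rat]_N :=
  \matrix_(i < N, j < N)
    let s := enum_val i in let t := enum_val j in
    if [&& simplex s, f @: s == t & #|t| == #|s|]
    then (-1) ^+ (inversions f s) else 0.

Definition chains (q : nat) : 'M[rat]_N :=
  diag_mx (\row_(i < N) (if qsimplex q (enum_val i) then 1 else 0)).

Definition cycles (q : nat) : 'M[rat]_N := (chains q :&: kermx bnd)%MS.
Definition boundaries (q : nat) : 'M[rat]_N := chains q.+1 *m bnd.

(* trace of the map induced by f_# on H_q(X;Q) = Z_q / B_q, computed on
   the complement W of Z_q :&: B_q in Z_q, with the projection along B_q *)
Definition htrace (f : X -> X) (q : nat) : rat :=
  let W := (cycles q :\: boundaries q)%MS in
  let Bw := row_base W in
  \tr (Bw *m chainmap f *m proj_mx W (boundaries q) *m pinvmx Bw).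

(* simplicial Lefschetz number (q-simplices exist only for q < #|X|) *)
Definition lefschetz (f : X -> X) : rat :=
  \sum_(q < #|X|.+1) (-1) ^+ q * htrace f q.

End DigitalImage.

From mathcomp Require Import all_boot all_order all_algebra ring.
Set Implicit Arguments. Unset Strict Implicit. Unset Printing Implicit Defensive.
Import Order.TTheory GRing.Theory Num.Theory.
Local Open Scope ring_scope.

(* If [f] has no fixed point and at most one approximate fixed point, then no
   simplex [s] satisfies [f(s) = s]: all points of such an [s] would be
   approximate fixed points, and [x], [f x] are two of them unless [f x = x].
   Hence every entry on the diagonal of the chain map [f_#] vanishes, so
   [tr(f_#) = 0] on each chain group [C_q], and the Hopf trace formula
   [sum_q (-1)^q tr(f_# | C_q) = sum_q (-1)^q tr(f_* | H_q) = L(f)] gives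
   [L(f) = 0]. *)

Section RestrictedTrace.
Variables (F : fieldType) (n : nat) (A : 'M[F]_n).

Definition projects_onto (P U : 'M[F]_n) : Prop := (P <= U)%MS /\ U *m P = U.

Lemma projects_onto_fix m (P U : 'M[F]_n) (v : 'M[F]_(m, n)) :
  projects_onto P U -> (v <= U)%MS -> v *m P = v.
Proof. by move=> [_ UP] /submxP[x ->]; rewrite -mulmxA UP. Qed.

Lemma idem_projects (C : 'M[F]_n) : C *m C = C -> projects_onto C C.
Proof. by split. Qed.

Definition row_proj (U : 'M[F]_n) : 'M[F]_n := pinvmx U *m U.

Lemma row_proj_projects (U : 'M[F]_n) : projects_onto (row_proj U) U.
Proof. by split; [exact: submxMl | rewrite /row_proj mulmxA mulmxKpV]. Qed.

(* The trace of [A] restricted to the row space of [U]; it is meaningful when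
   this space is [A]-stable, i.e. [(U *m A <= U)%MS]. *)
Definition restr_trace (U : 'M[F]_n) : F := \tr (row_proj U *m A).

Lemma restr_traceE (U P : 'M[F]_n) : (U *m A <= U)%MS -> projects_onto P U ->
  \tr (P *m A) = restr_trace U.
Proof.
move=> sUA hP; have hQ := row_proj_projects U.
have QP : row_proj U *m P = row_proj U by apply: projects_onto_fix hP hQ.1.
have PAU : (P *m A <= U)%MS by apply: submx_trans (submxMr A hP.1) sUA.
by rewrite /restr_trace -{1}(projects_onto_fix hQ PAU) mxtrace_mulC mulmxA QP.
Qed.

Lemma restr_trace0 : restr_trace 0 = 0.
Proof. by rewrite /restr_trace /row_proj !mulmx0 mul0mx mxtrace0. Qed.

(* The trace of the map induced by [A] on the quotient [Z / B], computed on
   the complement [Z :\: B] of [B] in [Z] via the projection along [B]. *)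
Definition quotient_trace (Z B : 'M[F]_n) : F :=
  \tr (row_base (Z :\: B)%MS *m A *m proj_mx (Z :\: B)%MS B
       *m pinvmx (row_base (Z :\: B)%MS)).

Lemma restr_trace_quotient (Z B : 'M[F]_n) : (B <= Z)%MS ->
  (Z *m A <= Z)%MS -> (B *m A <= B)%MS ->
  restr_trace Z = restr_trace B + quotient_trace Z B.
Proof.
move=> BZ sZ sB; rewrite /quotient_trace.
set W := (Z :\: B)%MS; set Bw := row_base W.
set G := row_proj Z; set PW := proj_mx W B; set P1 := pinvmx Bw *m Bw.
have dWB : (W :&: B = 0)%MS by apply: capmx_diff.
have ZWB : (Z <= W + B)%MS.
  have ZWZB : (Z <= W + Z :&: B)%MS by rewrite addsmx_diff_cap_eq.
  by apply: submx_trans ZWZB _; apply: addsmxS => //; exact: capmxSr.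
have GZ := row_proj_projects Z.
have hQB : projects_onto (G - G *m PW) B.
  split; first by apply: proj_mx_compl_sub; apply: submx_trans GZ.1 ZWB.
  by rewrite mulmxBr (projects_onto_fix GZ BZ) mulmxA (projects_onto_fix GZ BZ)
             proj_mx_0 // subr0.
have -> : restr_trace Z = \tr (G *m PW *m A) + \tr ((G - G *m PW) *m A).
  by rewrite -mxtraceD -mulmxDl addrC subrK.
rewrite (restr_traceE sB hQB) addrC; congr (_ + _).
have P1fix m (v : 'M[F]_(m, n)) : (v <= W)%MS -> v *m P1 = v.
  by move=> vW; rewrite /P1 mulmxA mulmxKpV // eq_row_base.
have QW1 : G *m PW *m P1 = G *m PW by apply: P1fix; exact: proj_mx_sub.
have P1Z : (P1 *m A <= Z)%MS.
  apply: submx_trans (submxMr A _) sZ.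
  apply: submx_trans (submxMl _ _) _; rewrite /Bw eq_row_base; exact: diffmxSl.
rewrite -QW1 -mulmxA mxtrace_mulC mulmxA (projects_onto_fix GZ P1Z).
by rewrite [RHS]mxtrace_mulC; congr (\tr _); rewrite /P1 !mulmxA.
Qed.

Lemma stable_cap_kernel (C D : 'M[F]_n) : (C *m A <= C)%MS -> A *m D = D *m A ->
  ((C :&: kermx D) *m A <= C :&: kermx D)%MS.
Proof.
move=> sCA AD; rewrite sub_capmx; apply/andP; split.
  exact: submx_trans (submxMr A (capmxSl _ _)) sCA.
rewrite sub_kermx -mulmxA AD mulmxA.
by have /sub_kermxP -> := capmxSr C (kermx D); rewrite mul0mx.
Qed.

Lemma stable_image (C D : 'M[F]_n) : C *m A = A *m C -> A *m D = D *m A ->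
  (C *m D *m A <= C *m D)%MS.
Proof. by move=> CA AD; rewrite -mulmxA -AD mulmxA CA -mulmxA submxMl. Qed.

Section KernelImage.
Variables (C D : 'M[F]_n).
Hypotheses (CC : C *m C = C) (CA : C *m A = A *m C) (AD : A *m D = D *m A).

Let Z := (C :&: kermx D)%MS.
Let K := C *m D.
Let G := C *m proj_mx Z (C :\: Z)%MS.
Let E := C - G.

Let fixC m (v : 'M[F]_(m, n)) : (v <= C)%MS -> v *m C = v.
Proof. exact: projects_onto_fix (idem_projects CC). Qed.

Let ZC : (Z <= C)%MS. Proof. exact: capmxSl. Qed.

Let G_proj : projects_onto G Z.
Proof.
have dZ : (Z :&: (C :\: Z) = 0)%MS by rewrite capmxC capmx_diff.
by split; [rewrite proj_mx_sub | rewrite /G mulmxA (fixC ZC) proj_mx_id].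
Qed.

Let GC : G *m C = G.
Proof. exact/fixC/(submx_trans G_proj.1 ZC). Qed.

Let E_idem : [/\ C *m E = E, E *m C = E & E *m E = E].
Proof.
have CG : C *m G = G by rewrite /G mulmxA CC.
have GG : G *m G = G by exact: projects_onto_fix G_proj G_proj.1.
have CE : C *m E = E by rewrite /E mulmxBr CC CG.
split=> //; first by rewrite /E mulmxBl CC GC.
by rewrite {1}/E mulmxBl CE /E mulmxBr GC GG subrr subr0.
Qed.

Let E_kernel m (v : 'M[F]_(m, n)) : (v <= Z)%MS -> v *m E = 0.
Proof.
move=> vZ; rewrite /E mulmxBr (fixC (submx_trans vZ ZC)).
by rewrite (projects_onto_fix G_proj vZ) subrr.
Qed.

Let ED : E *m D = K.
Proof.
have GD : G *m D = 0 by apply/sub_kermxP; apply: submx_trans G_proj.1 (capmxSr _ _).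
by rewrite /E mulmxBl GD subr0.
Qed.

(* [D] identifies the complement of [Z] in [C] with the image [K]: lifting
   [c *m D] back through [K] recovers [c] up to the kernel. *)
Let E_lift m (c : 'M[F]_(m, n)) : (c <= C)%MS ->
  c *m D *m pinvmx K *m E = c *m E.
Proof.
move=> cC; set x := c *m D *m pinvmx K.
have cK : (c *m D <= K)%MS by rewrite -(fixC cC) -mulmxA submxMl.
have xK : x *m K = c *m D by rewrite /x mulmxKpV.
have vZ : (x *m C - c <= Z)%MS.
  rewrite sub_capmx addmx_sub ?submxMl ?eqmx_opp //=.
  by rewrite sub_kermx mulmxBl -mulmxA -/K xK subrr.
have [CE _ _] := E_idem.
by move/E_kernel: vZ; rewrite mulmxBl -mulmxA CE => /eqP; rewrite subr_eq0 => /eqP.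
Qed.

(* Rank-nullity for traces: on the [A]-stable image of the idempotent [C],
   the trace of [A] is its trace on the kernel of [D] plus that on the image. *)
Lemma trace_kernel_image : \tr (C *m A) = restr_trace Z + restr_trace K.
Proof.
have [CE EC EE] := E_idem.
have sZ : (Z *m A <= Z)%MS by apply: stable_cap_kernel AD; rewrite CA submxMl.
have -> : \tr (C *m A) = \tr (G *m A) + \tr (E *m A).
  by rewrite -mxtraceD -mulmxDl /E addrC subrK.
rewrite (restr_traceE sZ G_proj); congr (_ + _).
have EAC : (E *m A <= C)%MS by rewrite -EC -mulmxA CA mulmxA submxMl.
have KA : K *m A = E *m E *m A *m D by rewrite -ED EE -!mulmxA AD.
rewrite /restr_trace /row_proj -mulmxA KA.
have -> : pinvmx K *m (E *m E *m A *m D) = (pinvmx K *m E) *m (E *m A *m D).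
  by rewrite !mulmxA.
rewrite [RHS]mxtrace_mulC mulmxA (E_lift EAC).
by rewrite [RHS]mxtrace_mulC mulmxA EE.
Qed.

End KernelImage.
End RestrictedTrace.

Section HopfTrace.
(* A finite chain complex inside ['M[F]_n]: idempotents [P q] onto the
   q-chains, a differential [D] of degree -1 and a chain map [A]. *)
Variables (F : fieldType) (n : nat) (A D : 'M[F]_n) (P : nat -> 'M[F]_n).
Hypotheses (P_idem : forall q, P q *m P q = P q)
  (PA : forall q, P q *m A = A *m P q) (PD : forall q, P q.+1 *m D = D *m P q)
  (DD : D *m D = 0) (AD : A *m D = D *m A) (P0D : P 0 *m D = 0).

Definition homology_trace (q : nat) : F :=
  quotient_trace A (P q :&: kermx D)%MS (P q.+1 *m D).

Lemma trace_chains_decomp q : \tr (P q *m A) =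
  homology_trace q + restr_trace A (P q.+1 *m D) + restr_trace A (P q *m D).
Proof.
rewrite (trace_kernel_image (P_idem q) (PA q) AD) (@restr_trace_quotient _ _ A _ (P q.+1 *m D)).
- by rewrite /homology_trace [restr_trace A (P q.+1 *m D) + _]addrC.
- rewrite sub_capmx; apply/andP; split; first by rewrite PD submxMl.
  by rewrite sub_kermx -mulmxA DD mulmx0.
- by apply: stable_cap_kernel AD; rewrite PA submxMl.
- exact: stable_image (PA q.+1) AD.
Qed.

Theorem hopf_trace_formula m : P m.+1 = 0 ->
  \sum_(q < m.+1) (-1) ^+ q * \tr (P q *m A) =
  \sum_(q < m.+1) (-1) ^+ q * homology_trace q.
Proof.
move=> Ptop; pose b q := restr_trace A (P q *m D).
have -> : \sum_(q < m.+1) (-1) ^+ q * \tr (P q *m A) =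
    \sum_(q < m.+1) (-1) ^+ q * homology_trace q +
    \sum_(q < m.+1) ((-1) ^+ q * b q - (-1) ^+ q.+1 * b q.+1).
  rewrite -big_split /=; apply: eq_bigr => q _.
  by rewrite trace_chains_decomp /b exprS; ring.
have telescope k : \sum_(q < k.+1) ((-1) ^+ q * b q - (-1) ^+ q.+1 * b q.+1) =
    b 0 - (-1) ^+ k.+1 * b k.+1.
  elim: k => [|k IH]; first by rewrite big_ord1 expr0 mul1r.
  by rewrite big_ord_recr /= IH; ring.
by rewrite telescope /b Ptop P0D mul0mx restr_trace0 mulr0 subrr addr0.
Qed.

End HopfTrace.

Definition signb (b : bool) : rat := (-1) ^+ b.

Lemma signb_count (T : eqType) (p : pred T) (l : seq T) :
  (-1) ^+ count p l = \prod_(y <- l) signb (p y).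
Proof. by elim: l => [|a l IH]; rewrite ?big_nil // big_cons /= exprD IH. Qed.

Lemma signb_card (T : finType) (p : pred T) :
  (-1) ^+ #|p| = \prod_(x : T) signb (p x).
Proof.
rewrite cardE /enum_mem size_filter signb_count.
by rewrite /index_enum; case: index_enum_key.
Qed.

Lemma index_filter (T : eqType) (p : pred T) (l : seq T) x :
  uniq l -> x \in l -> p x ->
  index x (filter p l) = count (fun y => p y && (index y l < index x l)%N) l.
Proof.
elim: l => [//|a l IH] /= /andP[al ul] xl px.
have [ax|ax] := eqVneq a x.
  subst a; rewrite px /= eqxx /= add0n.
  by rewrite (@eq_count _ _ pred0) ?count_pred0 // => y /=; rewrite ltn0 andbF.
rewrite inE eq_sym (negPf ax) /= in xl; rewrite eqxx /=.
have -> : count (fun y => p y &&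
              ((if a == y then 0 else (index y l).+1) < (index x l).+1)%N) l =
          count (fun y => p y && (index y l < index x l)%N) l.
  apply: eq_in_count => y yl /=.
  by have -> : (a == y) = false by apply/negbTE; apply: contraNneq al => ->.
by case: (p a); rewrite /= ?(negPf ax) IH.
Qed.

Section EnumOrder.
Variable X : finType.

Definition rank_lt (x y : X) : bool := (enum_rank x < enum_rank y)%N.

Lemma rank_lt_irr (x : X) : rank_lt x x = false.
Proof. by rewrite /rank_lt ltnn. Qed.

Lemma rank_neq (x y : X) : x != y -> (enum_rank x != enum_rank y :> nat).
Proof. by apply: contraNneq => /val_inj /enum_rank_inj ->. Qed.

Lemma signb_rank_lt_anti (x z : X) : x != z -> signb (rank_lt z x) = - signb (rank_lt x z).
Proof. by move/rank_neq; rewrite /rank_lt /signb; case: ltngtP; rewrite ?opprK. Qed.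

(* The sign (-1)^i of the position of [x] in the ordered simplex [s]. *)
Definition pos_sign (s : {set X}) (x : X) : rat := \prod_(y in s) signb (rank_lt y x).

Lemma index_enum_rank (y : X) : index y (enum X) = enum_rank y.
Proof. by rewrite -{1}(nth_enum_rank y y) index_uniq ?enum_uniq // -cardE ltn_ord. Qed.

Lemma index_sign (s : {set X}) x : x \in s ->
  (-1) ^+ index x (enum s) = pos_sign s x.
Proof.
move=> xs; have -> : enum s = filter (mem s) (enum X) by rewrite enumT /enum_mem.
rewrite index_filter ?enum_uniq ?mem_enum // signb_count.
rewrite big_enum /= [RHS]big_mkcond /=.
by apply: eq_big => // y _; rewrite /rank_lt !index_enum_rank; case: (y \in s).
Qed.

Lemma setD1C (s : {set X}) x z : s :\ x :\ z = s :\ z :\ x.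
Proof. by apply/setP => y; rewrite !inE; case: (y == x); case: (y == z). Qed.

Lemma pos_signD1 (s : {set X}) x z : x \in s -> z \in s -> x != z ->
  pos_sign s x = signb (rank_lt z x) * \prod_(y in s :\ x :\ z) signb (rank_lt y x).
Proof.
move=> xs zs xz; have zx : z \in s :\ x by rewrite in_setD1 eq_sym xz zs.
by rewrite /pos_sign (big_setD1 x xs) (big_setD1 z zx) /= rank_lt_irr mul1r.
Qed.

(* Removing [x] then [z] or [z] then [x] gives opposite signs: the
   combinatorial heart of [∂ ∂ = 0]. *)
Lemma pos_sign_swap (s : {set X}) x z : x \in s -> z \in s -> x != z ->
  pos_sign s x * pos_sign (s :\ x) z = - (pos_sign s z * pos_sign (s :\ z) x).
Proof.
move=> xs zs xz; have zx : z != x by rewrite eq_sym.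
have zs' : z \in s :\ x by rewrite in_setD1 zx zs.
have xs' : x \in s :\ z by rewrite in_setD1 xz xs.
rewrite /pos_sign (big_setD1 z zs) (big_setD1 x xs) (big_setD1 x xs') (big_setD1 z zs').
rewrite /= !rank_lt_irr (setD1C s z x) (signb_rank_lt_anti xz) /signb expr0.
ring.
Qed.

End EnumOrder.

Lemma sum_enum_val (X : finType) (G : {set X} -> rat) :
  \sum_(j < N X) G (enum_val j) = \sum_(t : {set X}) G t.
Proof. by rewrite /N -(big_enum_val (A := {set X})). Qed.

Lemma sum_antisym (T : finType) (s : {set T}) (G : T -> T -> rat) :
  {in s &, forall x z, G x z = - G z x} ->
  \sum_(x in s) \sum_(z in s) G x z = 0.
Proof.
move=> anti; set S := \sum_(x in s) _.
have SN : S = - S.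
  rewrite {1}/S exchange_big /S -sumrN; apply: eq_bigr => z zs.
  by rewrite -sumrN; apply: eq_bigr => x xs; exact: anti.
have : S *+ 2 == 0 by rewrite mulr2n {1}SN addNr.
by rewrite mulrn_eq0 /= => /eqP.
Qed.

Section Boundary.
Variables (X : finType) (e : rel X).
Local Notation simp := (simplex e).

Definition face_coef (s t : {set X}) : rat :=
  if [&& simp s, simp t, t \subset s & (#|t|.+1 == #|s|)%N]
  then \sum_(x in s :\: t) (-1) ^+ (index x (enum s)) else 0.

Lemma bndE i j : bnd e i j = face_coef (enum_val i) (enum_val j).
Proof. by rewrite mxE. Qed.

Lemma simplex_subset (s t : {set X}) : simp s -> t \subset s -> simp t = (0 < #|t|)%N.
Proof.
move=> /andP[_ /forall_inP Hs] ts; rewrite /simplex.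
case: (0 < #|t|)%N => //=; apply/forall_inP => x xt; apply/forall_inP => y yt.
exact: (forall_inP (Hs x (subsetP ts x xt)) y (subsetP ts y yt)).
Qed.

Lemma face_of_card (s t : {set X}) : t \subset s -> (#|t|.+1 == #|s|)%N ->
  exists2 x, x \in s & t = s :\ x.
Proof.
move=> ts /eqP ct.
have : #|s :\: t| == 1%N by rewrite cardsD (setIidPr ts) -ct subSn // subnn.
case/cards1P => x sx; have : x \in s :\: t by rewrite sx set11.
rewrite inE => /andP[xt xs]; exists x => //; apply/setP => y; rewrite !inE.
case yt: (y \in t).
  by rewrite (subsetP ts y yt) andbT; apply/esym/eqP => yx; rewrite -yx yt in xt.
case ys: (y \in s); rewrite ?andbF // andbT.
have : y \in s :\: t by rewrite inE yt ys.
by rewrite sx inE => ->.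
Qed.

Lemma sum_face_coef (s : {set X}) (G : {set X} -> rat) : simp s ->
  \sum_t face_coef s t * G t =
  \sum_(x in s) (if simp (s :\ x) then pos_sign s x * G (s :\ x) else 0).
Proof.
move=> Ss.
have coef x : x \in s -> face_coef s (s :\ x) = if simp (s :\ x) then pos_sign s x else 0.
  move=> xs; rewrite /face_coef Ss subD1set /= (cardsD1 x s) xs add1n eqxx andbT.
  case: (simp (s :\ x)) => //.
  have -> : s :\: (s :\ x) = [set x].
    apply/setP => y; rewrite !inE; case: (y =P x) => [->|_] /=; first by rewrite xs.
    by case: (y \in s).
  by rewrite big_set1 index_sign.
transitivity (\sum_(x in s) face_coef s (s :\ x) * G (s :\ x)); last first.
  by apply: eq_bigr => x xs; rewrite coef //; case: (simp (s :\ x)); rewrite ?mul0r.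
rewrite -(big_imset (fun t => face_coef s t * G t) (h := fun x => s :\ x)) /=; last first.
  move=> x y xs ys /setP /(_ x); rewrite !inE eqxx xs andbT /=.
  by rewrite andbT => /esym /negbFE /eqP.
rewrite [RHS]big_mkcond /=; apply: eq_bigr => t _.
case: ifP => // ti; rewrite /face_coef.
case: ifP => [/and4P[_ _ ts ct]|]; last by rewrite mul0r.
case: (face_of_card ts ct) => x xs tE.
by move: ti; rewrite tE (imset_f (fun y => s :\ y) xs).
Qed.

Lemma face_coefE (s u : {set X}) : simp s -> face_coef s u =
  \sum_(x in s) (if simp (s :\ x) && (s :\ x == u) then pos_sign s x else 0).
Proof.
move=> Ss; have := sum_face_coef (fun t => (t == u)%:R) Ss.
rewrite (bigD1 u) //= eqxx mulr1 big1 ?addr0 => [->|t /negPf->]; last by rewrite mulr0.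
by apply: eq_bigr => x _; case: (simp _); case: (_ == u); rewrite ?mulr1 ?mulr0.
Qed.

(* [∂ ∂ = 0]: each codimension-two face of [s] arises twice, with the
   opposite signs of [pos_sign_swap]. *)
Lemma bnd_bnd : bnd e *m bnd e = 0.
Proof.
apply/matrixP => i k; rewrite !mxE.
under eq_bigr do rewrite !bndE.
rewrite (sum_enum_val (fun t => face_coef (enum_val i) t * face_coef t (enum_val k))).
set s := enum_val i; set u := enum_val k.
case Ss: (simp s); last first.
  by rewrite big1 // => t _; rewrite /face_coef Ss /= mul0r.
rewrite sum_face_coef //.
pose G x z := if (z != x) && simp (s :\ x :\ z) && (s :\ x :\ z == u)
              then pos_sign s x * pos_sign (s :\ x) z else 0.
transitivity (\sum_(x in s) \sum_(z in s) G x z); last first.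
  apply: sum_antisym => x z xs zs.
  case: (eqVneq x z) => [<-|xz]; first by rewrite /G eqxx /= oppr0.
  rewrite /G eq_sym xz (setD1C s x z) /=.
  by case: ifP => _; [exact: pos_sign_swap | rewrite oppr0].
apply: eq_bigr => x xs.
case Sx: (simp (s :\ x)).
  rewrite face_coefE // big_distrr [RHS](big_setD1 x xs) /=.
  have -> : G x x = 0 by rewrite /G eqxx.
  rewrite add0r; apply: eq_bigr => z; rewrite in_setD1 => /andP[zx _].
  by rewrite /G zx /=; case: ifP; rewrite ?mulr0.
(* if [s :\ x] is empty, so is [s :\ x :\ z] *)
rewrite big1 // => z zs; rewrite /G; case: ifP => // /andP[/andP[_ Sxz] _].
have sub2 : s :\ x :\ z \subset s :\ x by apply: subD1set.
move: Sx; rewrite (simplex_subset Ss (subD1set s x)).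
move: Sxz; rewrite (simplex_subset Ss (subset_trans sub2 (subD1set s x))).
by move=> h1; rewrite (leq_trans h1 (subset_leq_card sub2)).
Qed.

End Boundary.

(* Sign identities for two distinct points with ranks [a != b] whose images
   have ranks [c != d]: they track how [f] permutes the ordered points. *)
Lemma signb_pair_reverse (a b c d : nat) : a != b -> c != d ->
  signb ((a < b)%N && (d < c)%N) * signb ((b < a)%N && (c < d)%N) * signb (d < c)%N =
  signb (b < a)%N.
Proof.
move=> ab cd; rewrite /signb -!signr_addb.
by case: (ltngtP a b) ab => // _ _; case: (ltngtP c d) cd.
Qed.

Lemma signb_pair_exchange (b a0 a1 c d : nat) : b != a0 -> b != a1 -> d != c ->
  signb (b < a0)%N * (signb ((a1 < b)%N && (d < c)%N) * signb ((b < a1)%N && (c < d)%N)) =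
  signb (b < a1)%N * (signb ((a0 < b)%N && (d < c)%N) * signb ((b < a0)%N && (c < d)%N)).
Proof.
move=> h0 h1 h2; rewrite /signb -!signr_addb.
by case: (ltngtP b a0) h0 => // _ _; case: (ltngtP b a1) h1 => // _ _;
  case: (ltngtP d c) h2.
Qed.

Lemma noninjective_pair (T T' : finType) (g : T -> T') (s : {set T}) :
  #|g @: s| != #|s| -> exists x0 x1, [/\ x0 \in s, x1 \in s, x0 != x1 & g x0 = g x1].
Proof.
move=> ninj; case: (boolP [exists x0 in s, exists x1 in s, (x0 != x1) && (g x0 == g x1)]).
  case/exists_inP => x0 x0s /exists_inP [x1 x1s /andP[x01 /eqP gx]].
  by exists x0, x1.
move=> H; case/negP: ninj; apply/imset_injP => a b ains bins gab.
apply/eqP; apply: contraNT H => ab; apply/exists_inP; exists a => //.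
by apply/exists_inP; exists b => //; rewrite ab gab eqxx.
Qed.

Section ChainMap.
Variables (X : finType) (e : rel X) (f : X -> X).
Hypothesis f_cont : dcontinuous e f.
Local Notation simp := (simplex e).

Definition chain_coef (s t : {set X}) : rat :=
  if [&& simp s, f @: s == t & #|t| == #|s|] then (-1) ^+ inversions f s else 0.

Lemma chainmapE i j : chainmap e f i j = chain_coef (enum_val i) (enum_val j).
Proof. by rewrite mxE. Qed.

Definition pair_sign (a b : X) : rat := signb (rank_lt a b && rank_lt (f b) (f a)).

(* The sign of the permutation sorting [f] applied to the ordered simplex [s]. *)
Definition orient_sign (s : {set X}) : rat :=
  \prod_(a in s) \prod_(b in s) pair_sign a b.

Lemma inversions_sign (s : {set X}) : (-1) ^+ inversions f s = orient_sign s.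
Proof.
rewrite /inversions cardsE signb_card /orient_sign [RHS]big_mkcond /=.
under [RHS]eq_bigr do rewrite big_mkcond /=.
transitivity (\prod_i \prod_j (if (i \in s) && (j \in s) then pair_sign i j else 1)).
  rewrite pair_bigA; apply: eq_bigr => [[a b]] _ /=.
  by rewrite /pair_sign /rank_lt; case: (a \in s); case: (b \in s).
by apply: eq_bigr => i _; case: (i \in s) => //=; rewrite big1.
Qed.

Lemma simplex_image (s : {set X}) : simp s -> simp (f @: s).
Proof.
move=> /andP[s0 /forall_inP Hs]; apply/andP; split.
  by rewrite card_gt0 imset_eq0 -card_gt0.
apply/forall_inP => a /imsetP[x xs ->]; apply/forall_inP => b /imsetP[y ys ->].
apply/implyP => neq; have xy : x != y by apply: contraNneq neq => ->.
have := f_cont (implyP (forall_inP (Hs x xs) y ys) xy).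
by rewrite /adj_eq (negPf neq).
Qed.

Lemma orient_signD1 (t : {set X}) z : z \in t ->
  orient_sign t = orient_sign (t :\ z) * \prod_(q in t :\ z) (pair_sign z q * pair_sign q z).
Proof.
move=> zt; rewrite /orient_sign (big_setD1 z zt) /= (big_setD1 z zt) /=.
rewrite {1}/pair_sign rank_lt_irr /= mul1r.
have -> : \prod_(a in t :\ z) \prod_(b in t) pair_sign a b =
    \prod_(a in t :\ z) pair_sign a z * \prod_(a in t :\ z) \prod_(b in t :\ z) pair_sign a b.
  by rewrite -big_split; apply: eq_bigr => a _; rewrite (big_setD1 z zt).
rewrite big_split /=; ring.
Qed.

Lemma orient_sign_face (s : {set X}) x : x \in s -> {in s &, injective f} ->
  orient_sign s * pos_sign (f @: s) (f x) = pos_sign s x * orient_sign (s :\ x).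
Proof.
move=> xs injf.
rewrite (orient_signD1 xs) /pos_sign big_imset //= (big_setD1 x xs) [in RHS](big_setD1 x xs).
rewrite /= !rank_lt_irr !mul1r -mulrA -big_split [RHS]mulrC; congr (_ * _).
apply: eq_bigr => q; rewrite in_setD1 => /andP[qx qs].
have xq : x != q by rewrite eq_sym.
have fxq : f x != f q by apply: contraNneq qx => /(injf _ _ xs qs) ->.
by rewrite /pair_sign /rank_lt; apply: signb_pair_reverse; apply: rank_neq.
Qed.

Lemma orient_sign_collapse (s : {set X}) x0 x1 :
  x0 \in s -> x1 \in s -> x0 != x1 -> f x0 = f x1 -> {in s :\ x0 &, injective f} ->
  pos_sign s x0 * orient_sign (s :\ x0) = - (pos_sign s x1 * orient_sign (s :\ x1)).
Proof.
move=> x0s x1s x01 fx injf; have x10 : x1 != x0 by rewrite eq_sym.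
have x1' : x1 \in s :\ x0 by rewrite in_setD1 x10 x1s.
have x0' : x0 \in s :\ x1 by rewrite in_setD1 x01 x0s.
rewrite (orient_signD1 x1') (orient_signD1 x0') (pos_signD1 x0s x1s x01).
rewrite (pos_signD1 x1s x0s x10) (setD1C s x1 x0) (signb_rank_lt_anti x01).
set P := s :\ x0 :\ x1.
have key : \prod_(y in P) signb (rank_lt y x0) * \prod_(q in P) (pair_sign x1 q * pair_sign q x1) =
           \prod_(y in P) signb (rank_lt y x1) * \prod_(q in P) (pair_sign x0 q * pair_sign q x0).
  rewrite -!big_split; apply: eq_bigr => q; rewrite !in_setD1 => /and3P[qx1 qx0 qs].
  have qs' : q \in s :\ x0 by rewrite in_setD1 qx0 qs.
  have fqx : f q != f x0.
    by rewrite fx; apply: contraNneq qx1 => /(injf _ _ qs' x1') ->.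
  rewrite /pair_sign /rank_lt -fx; apply: signb_pair_exchange; exact: rank_neq.
transitivity (- signb (rank_lt x0 x1) * orient_sign P *
   (\prod_(y in P) signb (rank_lt y x0) *
    \prod_(q in P) (pair_sign x1 q * pair_sign q x1))); first ring.
by rewrite key; ring.
Qed.

Lemma imset_setD1 (s : {set X}) x : x \in s -> {in s &, injective f} ->
  f @: s :\ f x = f @: (s :\ x).
Proof.
move=> xs injf; apply/eqP; rewrite eqEsubset; apply/andP; split; apply/subsetP => y.
  rewrite in_setD1 => /andP[yfx /imsetP[z zs yE]]; rewrite yE in yfx *.
  by apply: imset_f; rewrite in_setD1 zs andbT; apply: contraNneq yfx => ->.
case/imsetP => z; rewrite in_setD1 => /andP[zx zs] ->.
by rewrite in_setD1 imset_f // andbT; apply: contraNneq zx => /(injf _ _ zs xs) ->.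
Qed.

Lemma imset_collapse (s : {set X}) x0 x1 : x0 \in s -> x1 \in s -> x0 != x1 ->
  f x0 = f x1 -> f @: (s :\ x0) = f @: s.
Proof.
move=> x0s x1s x01 fx; apply/eqP; rewrite eqEsubset imsetS ?subD1set //=.
apply/subsetP => y /imsetP[z zs ->].
case: (eqVneq z x0) => [->|zx].
  by rewrite fx; apply: imset_f; rewrite in_setD1 eq_sym x01 x1s.
by apply: imset_f; rewrite in_setD1 zx zs.
Qed.

Lemma sum_chain_coef (s : {set X}) (G : {set X} -> rat) :
  \sum_t chain_coef s t * G t =
  if simp s && (#|f @: s| == #|s|) then orient_sign s * G (f @: s) else 0.
Proof.
rewrite (bigD1 (f @: s)) //= big1 ?addr0 => [|t tne]; last first.
  by rewrite /chain_coef eq_sym (negPf tne) andbF /= mul0r.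
rewrite /chain_coef eqxx inversions_sign.
by case: (simp s); case: (_ == _); rewrite /= ?mul0r.
Qed.

Lemma chain_bnd_injective (s u : {set X}) : simp s -> {in s &, injective f} ->
  orient_sign s * face_coef e (f @: s) u =
  \sum_(x in s) (if simp (s :\ x) then pos_sign s x * chain_coef (s :\ x) u else 0).
Proof.
move=> Ss injf.
rewrite face_coefE ?simplex_image // big_imset //= big_distrr; apply: eq_bigr => x xs /=.
rewrite (imset_setD1 xs injf).
have Sfx : simp (f @: (s :\ x)) = simp (s :\ x).
  rewrite (simplex_subset (simplex_image Ss) (imsetS f (subD1set s x))).
  by rewrite (simplex_subset Ss (subD1set s x)) !card_gt0 imset_eq0.
rewrite Sfx; case Sx: (simp (s :\ x)); last by rewrite /= mulr0.
rewrite /chain_coef Sx /=.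
have cardx : #|f @: (s :\ x)| = #|s :\ x|.
  by apply/eqP/imset_injP => a b ha hb; apply: injf; exact: (subsetP (subD1set s x)).
have [<-|ne] := eqVneq (f @: (s :\ x)) u; last by rewrite /= !mulr0.
by rewrite cardx eqxx inversions_sign /= (orient_sign_face xs injf).
Qed.

(* When [f] collapses [s], the faces of [s] cancel in pairs under [f_#]:
   only the faces omitting one of the two identified points survive. *)
Lemma chain_bnd_collapse (s u : {set X}) : simp s -> #|f @: s| != #|s| ->
  \sum_(x in s) (if simp (s :\ x) then pos_sign s x * chain_coef (s :\ x) u else 0) = 0.
Proof.
move=> Ss /noninjective_pair[x0 [x1 [x0s x1s x01 fx]]].
have x10 : x1 != x0 by rewrite eq_sym.
have x1' : x1 \in s :\ x0 by rewrite in_setD1 x10 x1s.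
have x0' : x0 \in s :\ x1 by rewrite in_setD1 x01 x0s.
rewrite (big_setD1 x0 x0s) (big_setD1 x1 x1') /= big1 ?addr0; last first.
  move=> x; rewrite !in_setD1 => /and3P[xx1 xx0 xs].
  case: ifP => // _; rewrite /chain_coef; case: ifP => [|_]; last by rewrite mulr0.
  move=> /and3P[_ /eqP fu cu]; exfalso.
  have injx : {in s :\ x &, injective f} by apply/imset_injP; rewrite fu.
  have a0 : x0 \in s :\ x by rewrite in_setD1 eq_sym xx0 x0s.
  have a1 : x1 \in s :\ x by rewrite in_setD1 eq_sym xx1 x1s.
  by move/eqP: (injx _ _ a0 a1 fx); rewrite (negPf x01).
have S0 : simp (s :\ x0).
  by rewrite (simplex_subset Ss (subD1set s x0)) card_gt0; apply/set0Pn; exists x1.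
have S1 : simp (s :\ x1).
  by rewrite (simplex_subset Ss (subD1set s x1)) card_gt0; apply/set0Pn; exists x0.
have c01 : #|s :\ x1| = #|s :\ x0|.
  have c0 := cardsD1 x0 s; have c1 := cardsD1 x1 s.
  by rewrite x0s in c0; rewrite x1s c0 in c1; case: c1.
rewrite S0 S1 /chain_coef S0 S1 (imset_collapse x0s x1s x01 fx).
rewrite (imset_collapse x1s x0s x10 (esym fx)) c01 /=.
case: ifP => [/andP[/eqP fu cu]|_]; last by rewrite !mulr0 addr0.
rewrite !inversions_sign (orient_sign_collapse x0s x1s x01 fx) ?addNr //.
by apply/imset_injP; rewrite (imset_collapse x0s x1s x01 fx) fu.
Qed.

Lemma chainmap_bnd : chainmap e f *m bnd e = bnd e *m chainmap e f.
Proof.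
apply/matrixP => i k; rewrite !mxE.
under eq_bigr do rewrite chainmapE bndE.
under [RHS]eq_bigr do rewrite bndE chainmapE.
rewrite (sum_enum_val (fun t => chain_coef (enum_val i) t * face_coef e t (enum_val k))).
rewrite (sum_enum_val (fun t => face_coef e (enum_val i) t * chain_coef t (enum_val k))).
rewrite sum_chain_coef; set s := enum_val i; set u := enum_val k.
case Ss: (simp s); last first.
  by rewrite /= big1 // => t _; rewrite /face_coef Ss /= mul0r.
rewrite sum_face_coef //=; case: (boolP (#|f @: s| == #|s|)) => inj.
  by apply: chain_bnd_injective => //; apply/imset_injP.
by rewrite chain_bnd_collapse.
Qed.

End ChainMap.

Section ChainComplex.
Variables (X : finType) (e : rel X).
Local Notation simp := (simplex e).

Lemma chains_idem q : chains e q *m chains e q = chains e q.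
Proof.
apply/matrixP => i j; rewrite mul_diag_mx !mxE.
by case: (qsimplex e q _); case: (i == j); rewrite /= ?mul1r ?mul0r.
Qed.

Lemma chains_chainmap (f : X -> X) : dcontinuous e f ->
  forall q, chains e q *m chainmap e f = chainmap e f *m chains e q.
Proof.
move=> f_cont q; apply/matrixP => i j.
rewrite mul_diag_mx mul_mx_diag mxE [RHS]mxE chainmapE !mxE /chain_coef.
case: (boolP [&& simp (enum_val i), f @: enum_val i == enum_val j
                & #|enum_val j| == #|enum_val i|]) => [/and3P[Ss /eqP st /eqP ct]|_].
  have -> : qsimplex e q (enum_val j) = qsimplex e q (enum_val i).
    by rewrite /qsimplex ct -st (simplex_image f_cont Ss) Ss.
  by rewrite mulrC.
by rewrite mulr0 mul0r.
Qed.

Lemma chains_bnd q : chains e q.+1 *m bnd e = bnd e *m chains e q.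
Proof.
apply/matrixP => i j; rewrite mul_diag_mx mul_mx_diag mxE [RHS]mxE bndE !mxE /face_coef.
case: (boolP [&& simp (enum_val i), simp (enum_val j), enum_val j \subset enum_val i
                & #|enum_val j|.+1 == #|enum_val i|]) => [/and4P[Ss St _ /eqP ct]|_].
  have -> : qsimplex e q.+1 (enum_val i) = qsimplex e q (enum_val j).
    by rewrite /qsimplex Ss St -ct eqSS.
  by rewrite mulrC.
by rewrite mulr0 mul0r.
Qed.

Lemma chains0_bnd : chains e 0 *m bnd e = 0.
Proof.
apply/matrixP => i j; rewrite mul_diag_mx mxE bndE !mxE /face_coef.
case: ifP => [/andP[_ /eqP c1]|_]; last by rewrite mul0r.
case: ifP => [/and4P[_ /andP[t0 _] _ /eqP ct]|_]; last by rewrite mulr0.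
by move: t0; rewrite c1 in ct; case: ct => ->.
Qed.

Lemma chains_top : chains e #|X|.+1 = 0.
Proof.
apply/matrixP => i j; rewrite !mxE /qsimplex.
case: ifP => [/andP[_ /eqP c]|_]; last by rewrite mul0rn.
have := max_card (mem (enum_val i)); rewrite c => h.
by have := leq_trans (leqnSn _) h; rewrite ltnn.
Qed.

Lemma trace_chainmap_eq0 (f : X -> X) q : (forall s, simp s -> f @: s != s) ->
  \tr (chains e q *m chainmap e f) = 0.
Proof.
move=> noinv; rewrite /mxtrace big1 // => i _.
rewrite mul_diag_mx mxE chainmapE !mxE /chain_coef.
case: (boolP [&& simp (enum_val i), f @: enum_val i == enum_val i
                & #|enum_val i| == #|enum_val i|]) => [/and3P[Ss st _]|_].
  by move: (noinv _ Ss); rewrite st.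
by rewrite mulr0.
Qed.

Lemma lefschetz_eq0 (f : X -> X) : dcontinuous e f ->
  (forall s, simp s -> f @: s != s) -> lefschetz e f = 0.
Proof.
move=> f_cont noinv.
have -> : lefschetz e f = \sum_(q < #|X|.+1)
    (-1) ^+ q * homology_trace (chainmap e f) (bnd e) (chains e) q by [].
rewrite -(hopf_trace_formula (chains_idem) (chains_chainmap f_cont) chains_bnd
  (bnd_bnd e) (chainmap_bnd f_cont) chains0_bnd chains_top).
by rewrite big1 // => q _; rewrite trace_chainmap_eq0 ?mulr0.
Qed.

End ChainComplex.

(* Every point of a simplex mapped onto itself is an approximate fixed point:
   [f x] and [x] both lie in the simplex, so they are equal or adjacent. *)
Lemma invariant_simplex_approx (X : finType) (e : rel X) (f : X -> X) (s : {set X}) x :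
  simplex e s -> f @: s = s -> x \in s -> approx_fixed e f x.
Proof.
move=> /andP[_ /forall_inP Hs] fs xs; rewrite /approx_fixed /adj_eq.
have fxs : f x \in s by rewrite -fs imset_f.
by case: eqVneq => //= fxx; exact: (implyP (forall_inP (Hs _ fxs) x xs) fxx).
Qed.

(* An invariant simplex yields a fixed point [x], or else two distinct
   approximate fixed points [x] and [f x]. *)
Lemma invariant_simplex_dichotomy (X : finType) (e : rel X) (f : X -> X) (s : {set X}) :
  simplex e s -> f @: s = s ->
  (exists x, f x = x) \/
  (exists x y, x != y /\ approx_fixed e f x /\ approx_fixed e f y).
Proof.
move=> Ss fs; have /set0Pn[x xs] : s != set0 by case/andP: Ss; rewrite card_gt0.
have [fxx|fxx] := eqVneq (f x) x; first by left; exists x.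
have fxs : f x \in s by rewrite -fs imset_f.
by right; exists x, (f x); rewrite eq_sym fxx; split=> //; split;
  apply: invariant_simplex_approx Ss fs _.
Qed.

Theorem corollary3p4 (X : finType) (e : rel X)
  (e_sym : symmetric e) (e_irr : irreflexive e)
  (f : X -> X) (f_cont : dcontinuous e f)
  (hL : lefschetz e f != 0%R) :
  (exists x, f x = x) \/
  (exists x y, x != y /\ approx_fixed e f x /\ approx_fixed e f y).
Proof.
case: (boolP [exists s, simplex e s && (f @: s == s)]).
  by case/existsP => s /andP[Ss /eqP fs]; exact: invariant_simplex_dichotomy Ss fs.
move=> noinv; exfalso; move/eqP: hL; apply; apply: lefschetz_eq0 f_cont _ => s Ss.
by apply: contraNneq noinv => fs; apply/existsP; exists s; rewrite Ss fs eqxx.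
Qed.
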